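(* Let $G\subseteq\ell^2$ be a dense $G_\delta$ set and $f:G\to\{1,2\}^\omega$ a continuous function such that $y\notin\mathsf{HC}(f(y))$ for each $y\in G$, $\mathsf{HC}(f(y))\neq\emptyset$ for each $y\in G$, and for each nonempty open $U\subseteq\ell^2$ the image $f[U\cap G]$ contains at least two elements. Then there is a perfect set $P\subseteq G$ (a closed subset of $\ell^2$ with no isolated points) such that $x\notin\mathsf{HC}(f(x))$ for all $x\in P$, and $x\in\mathsf{HC}(f(y))$ for all distinct $x,y\in P$.
   Context: $\omega=\{0,1,2,\dots\}$; $\ell^2$ is the Hilbert space of square-summable real sequences indexed by $\omega$ with its norm topology; $\{1,2\}^\omega$ has the product topology. For $w\in\{1,2\}^\omega$, $B_w:\ell^2\to\ell^2$ is $B_w(x)(i)=w(i)\,x(i+1)$, and $\mathsf{HC}(w)$ is the set of $x\in\ell^2$ such that $\{B_w^k(x):k\in\omega\}$ is dense in $\ell^2$. *)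

From Stdlib Require Import Reals.
From Coquelicot Require Import Coquelicot.
Open Scope R_scope.

Definition seqR := nat -> R.

Definition in_l2 (x : seqR) : Prop := ex_series (fun i => (x i) ^ 2).

(* the l^2 norm distance (meaningful for x, y in l^2) *)
Definition l2dist (x y : seqR) : R := sqrt (Series (fun i => (x i - y i) ^ 2)).

(* Subsets of l^2 are predicates on sequences contained in in_l2. *)
Definition l2_open (U : seqR -> Prop) : Prop :=
  (forall x, U x -> in_l2 x) /\
  forall x, U x -> exists eps, 0 < eps /\
    forall y, in_l2 y -> l2dist x y < eps -> U y.

Definition l2_dense (D : seqR -> Prop) : Prop :=
  (forall x, D x -> in_l2 x) /\
  forall x eps, in_l2 x -> 0 < eps -> exists y, D y /\ l2dist x y < eps.

Definition l2_Gdelta (G : seqR -> Prop) : Prop :=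
  exists Us : nat -> seqR -> Prop,
    (forall n, l2_open (Us n)) /\ forall x, G x <-> (forall n, Us n x).

Definition l2_closed (P : seqR -> Prop) : Prop :=
  (forall x, P x -> in_l2 x) /\
  forall x, in_l2 x ->
    (forall eps, 0 < eps -> exists y, P y /\ l2dist x y < eps) -> P x.

Definition l2_perfect (P : seqR -> Prop) : Prop :=
  l2_closed P /\ (exists p, P p) /\
  forall x, P x -> forall eps, 0 < eps ->
    exists y, P y /\ y <> x /\ l2dist x y < eps.

(* {1,2}^omega, coded by bool: false ~ 1, true ~ 2 *)
Definition weight := nat -> bool.
Definition wval (b : bool) : R := if b then 2 else 1.

Definition Bw (w : weight) (x : seqR) : seqR := fun i => wval (w i) * x (S i).

Definition HC (w : weight) (x : seqR) : Prop :=
  in_l2 x /\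
  forall z eps, in_l2 z -> 0 < eps ->
    exists k : nat, l2dist (Nat.iter k (Bw w) x) z < eps.

(* continuity of f : G -> {1,2}^omega (product of discrete spaces):
   each coordinate is locally constant on G *)
Definition cont_on (G : seqR -> Prop) (f : seqR -> weight) : Prop :=
  forall y, G y -> forall n : nat, exists eps, 0 < eps /\
    forall z, G z -> l2dist y z < eps -> f z n = f y n.

From Stdlib Require Import Reals Lra Lia ZArith List Bool
  FunctionalExtensionality Classical ClassicalEpsilon.
From Coquelicot Require Import Coquelicot.
Open Scope R_scope.

(* P is the limit set of a Cantor scheme of closed balls B_s, indexed by finite
   binary strings s, with centres in G, radius at most 2^-|s|, children strictly
   inside their parent, disjoint siblings, and B_s inside the |s|-th open set of a
   G_delta representation of G; such a P is perfect and contained in G.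
   Moreover, for distinct s, t of length n and every c in the finite set [grid n]
   of finitely supported targets (the grids together are dense in l^2), each x in
   B_s and each y in G lying in B_t have an iterate B_{f(y)}^k x within 1/(n+1) of c;
   hence x is hypercyclic for f(y) whenever x <> y lie in P.
   One such requirement is met by shrinking B_s and B_t: as HC(f(b)) is nonempty,
   the products of the weights f(b) are unbounded, so a small perturbation of the
   centre of B_s far out is mapped exactly onto c by B_{f(b)}^k, and, f being
   continuous, the same holds with f(y) for y close to b. *)

Fixpoint psum (u : nat -> R) (n : nat) : R :=
  match n with O => 0 | S k => psum u k + u k end.

Lemma sum_n_psum u n : sum_n u n = psum u (S n).
Proof.
  induction n as [|n IH].
  - rewrite sum_O. simpl. lra.
  - rewrite sum_Sn, IH. simpl. change plus with Rplus. lra.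
Qed.

Lemma psum_nonneg u n : (forall i, 0 <= u i) -> 0 <= psum u n.
Proof. intros H; induction n; simpl; [lra | specialize (H n); lra]. Qed.

Lemma psum_incr u n m : (forall i, 0 <= u i) -> (n <= m)%nat -> psum u n <= psum u m.
Proof. intros H Hnm; induction Hnm; [lra |]. simpl. specialize (H m); lra. Qed.

Lemma psum_le_compat u v n : (forall i, u i <= v i) -> psum u n <= psum v n.
Proof. intros H; induction n; simpl; [lra | specialize (H n); lra]. Qed.

Lemma psum_ext u v n : (forall i, u i = v i) -> psum u n = psum v n.
Proof. intros H; induction n; simpl; [lra | rewrite H; lra]. Qed.

Lemma psum_scal c u n : psum (fun i => c * u i) n = c * psum u n.
Proof. induction n; simpl; [lra | rewrite IHn; lra]. Qed.

Lemma psum_plus u v n : psum (fun i => u i + v i) n = psum u n + psum v n.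
Proof. induction n; simpl; [lra | rewrite IHn; lra]. Qed.

Lemma psum_add u a b : psum u (a + b) = psum u a + psum (fun i => u (a + i)%nat) b.
Proof.
  induction b; simpl.
  - rewrite Nat.add_0_r. lra.
  - rewrite Nat.add_succ_r. simpl. rewrite IHb. lra.
Qed.

Lemma psum_shift u n : psum u (S n) = u O + psum (fun i => u (S i)) n.
Proof. induction n; cbn [psum] in *; [lra |]. rewrite IHn. lra. Qed.

Lemma psum_zero u n : (forall i, (i < n)%nat -> u i = 0) -> psum u n = 0.
Proof.
  induction n; intros H; cbn [psum]; auto.
  rewrite IHn by (intros; apply H; lia). rewrite H by lia. ring.
Qed.

Lemma psum_finite_support u N n : (forall i, 0 <= u i) ->
  (forall i, (N <= i)%nat -> u i = 0) -> psum u n <= psum u N.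
Proof.
  intros H0 H. induction n; simpl.
  - apply psum_nonneg; auto.
  - destruct (le_lt_dec N n) as [HNn | HnN].
    + rewrite (H n HNn). lra.
    + apply (psum_incr u (S n) N H0 HnN).
Qed.

Lemma psum_le_const u N C : (forall i, u i <= C) -> psum u N <= INR N * C.
Proof.
  intros H; induction N; simpl psum; [simpl; lra |].
  rewrite S_INR. specialize (H N). lra.
Qed.

Lemma ex_series_psum_bounded u C : (forall i, 0 <= u i) -> (forall n, psum u n <= C) ->
  ex_series u /\ Series u <= C.
Proof.
  intros H0 HC.
  assert (Hinc : forall n, sum_n u n <= sum_n u (S n))
    by (intros n; rewrite !sum_n_psum; apply psum_incr; auto).
  assert (Hb : forall n, sum_n u n <= C) by (intros n; rewrite sum_n_psum; auto).
  destruct (ex_finite_lim_seq_incr _ C Hinc Hb) as [l Hl].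
  assert (Hs : is_series u l) by exact Hl.
  split; [exists l; exact Hs |].
  rewrite (is_series_unique _ _ Hs).
  exact (is_lim_seq_le _ _ _ _ Hb Hl (is_lim_seq_const C)).
Qed.

Lemma psum_le_Series u n : (forall i, 0 <= u i) -> ex_series u -> psum u n <= Series u.
Proof.
  intros H0 [l Hl]. rewrite (is_series_unique _ _ Hl).
  refine (is_lim_seq_le_loc (fun _ => psum u n) (sum_n u) (psum u n) l _
            (is_lim_seq_const _) Hl).
  exists n. intros m Hm. rewrite sum_n_psum. apply psum_incr; auto.
Qed.

Definition sqdiff (x y : seqR) (i : nat) : R := (x i - y i) ^ 2.

Definition zero_seq : seqR := fun _ => 0.

Lemma sqdiff_nonneg x y i : 0 <= sqdiff x y i.
Proof. apply pow2_ge_0. Qed.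

Lemma in_l2_ext x y : (forall i, x i = y i) -> in_l2 x -> in_l2 y.
Proof.
  intros H. apply ex_series_ext. intros n. now rewrite H.
Qed.

Lemma in_l2_lin a b x y : in_l2 x -> in_l2 y -> in_l2 (fun i => a * x i + b * y i).
Proof.
  intros Hx Hy.
  apply (ex_series_psum_bounded _
     (2 * a ^ 2 * Series (fun i => x i ^ 2) + 2 * b ^ 2 * Series (fun i => y i ^ 2))).
  - intros; apply pow2_ge_0.
  - intros n.
    apply Rle_trans with (psum (fun i => 2 * a ^ 2 * x i ^ 2 + 2 * b ^ 2 * y i ^ 2) n).
    + apply psum_le_compat. intros i. pose proof (pow2_ge_0 (a * x i - b * y i)). nra.
    + rewrite psum_plus, !psum_scal.
      pose proof (psum_le_Series (fun i => x i ^ 2) n (fun i => pow2_ge_0 _) Hx).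
      pose proof (psum_le_Series (fun i => y i ^ 2) n (fun i => pow2_ge_0 _) Hy).
      pose proof (pow2_ge_0 a). pose proof (pow2_ge_0 b). nra.
Qed.

Lemma in_l2_plus x y : in_l2 x -> in_l2 y -> in_l2 (fun i => x i + y i).
Proof. intros. apply (in_l2_ext (fun i => 1 * x i + 1 * y i)); [intros; ring | now apply in_l2_lin]. Qed.

Lemma in_l2_finite_support u N : (forall i, (N <= i)%nat -> u i = 0) -> in_l2 u.
Proof.
  intros H. apply (ex_series_psum_bounded _ (psum (fun i => u i ^ 2) N)).
  - intros; apply pow2_ge_0.
  - intros n. apply psum_finite_support; [intros; apply pow2_ge_0 |].
    intros i Hi. rewrite H; auto. ring.
Qed.

Lemma in_l2_zero : in_l2 zero_seq.
Proof. apply (in_l2_finite_support _ 0). reflexivity. Qed.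

Lemma ex_series_sqdiff x y : in_l2 x -> in_l2 y -> ex_series (sqdiff x y).
Proof.
  intros Hx Hy. apply (in_l2_ext (fun i => 1 * x i + -1 * y i)); [intros; ring |].
  now apply in_l2_lin.
Qed.

Lemma l2dist_sqr x y : in_l2 x -> in_l2 y -> l2dist x y ^ 2 = Series (sqdiff x y).
Proof.
  intros Hx Hy. unfold l2dist. rewrite pow2_sqrt; [reflexivity |].
  apply (Rle_trans _ (psum (sqdiff x y) 0)); [simpl; lra |].
  apply psum_le_Series; [apply sqdiff_nonneg | now apply ex_series_sqdiff].
Qed.

Lemma l2dist_ge0 x y : 0 <= l2dist x y.
Proof. apply sqrt_pos. Qed.

Lemma l2dist_sym x y : l2dist x y = l2dist y x.
Proof. unfold l2dist. f_equal. apply Series_ext. intros; ring. Qed.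

Lemma psum_le_l2dist_sqr x y n : in_l2 x -> in_l2 y -> psum (sqdiff x y) n <= l2dist x y ^ 2.
Proof.
  intros Hx Hy. rewrite l2dist_sqr by auto.
  apply psum_le_Series; [apply sqdiff_nonneg | now apply ex_series_sqdiff].
Qed.

Lemma l2dist_le x y C : 0 <= C -> (forall n, psum (sqdiff x y) n <= C ^ 2) -> l2dist x y <= C.
Proof.
  intros HC H.
  destruct (ex_series_psum_bounded _ _ (sqdiff_nonneg x y) H) as [_ HS].
  unfold l2dist. rewrite <- (sqrt_pow2 C HC). now apply sqrt_le_1_alt.
Qed.

Lemma l2dist_refl x : l2dist x x = 0.
Proof.
  apply Rle_antisym; [| apply l2dist_ge0]. apply l2dist_le; [lra |].
  intros n. rewrite psum_zero; [simpl; lra |]. intros i _. unfold sqdiff. ring.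
Qed.

Lemma l2dist_coord x y i : in_l2 x -> in_l2 y -> Rabs (x i - y i) <= l2dist x y.
Proof.
  intros Hx Hy.
  pose proof (psum_le_l2dist_sqr x y (S i) Hx Hy) as H. simpl in H.
  pose proof (psum_nonneg (sqdiff x y) i (sqdiff_nonneg x y)).
  rewrite <- (sqrt_pow2 (l2dist x y)) by apply l2dist_ge0.
  rewrite <- sqrt_Rsqr_abs. apply sqrt_le_1_alt. unfold Rsqr, sqdiff in *. simpl in *. lra.
Qed.

Lemma l2dist_eq0 x y : in_l2 x -> in_l2 y -> l2dist x y = 0 -> x = y.
Proof.
  intros Hx Hy H0. apply functional_extensionality. intros i.
  pose proof (l2dist_coord x y i Hx Hy) as H. rewrite H0 in H.
  pose proof (Rabs_pos (x i - y i)).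
  assert (Rabs (x i - y i) = 0) as E by lra. apply Rabs_eq_0 in E. lra.
Qed.

Lemma minkowski_2d p q a b : 0 <= p -> 0 <= q ->
  sqrt ((p + q) ^ 2 + (a + b) ^ 2) <= sqrt (p ^ 2 + a ^ 2) + sqrt (q ^ 2 + b ^ 2).
Proof.
  intros Hp Hq.
  set (s := sqrt (p ^ 2 + a ^ 2)). set (t := sqrt (q ^ 2 + b ^ 2)).
  assert (Hs : 0 <= s) by apply sqrt_pos. assert (Ht : 0 <= t) by apply sqrt_pos.
  pose proof (pow2_ge_0 p). pose proof (pow2_ge_0 q).
  pose proof (pow2_ge_0 a). pose proof (pow2_ge_0 b).
  assert (Hs2 : s * s = p ^ 2 + a ^ 2) by (apply sqrt_sqrt; lra).
  assert (Ht2 : t * t = q ^ 2 + b ^ 2) by (apply sqrt_sqrt; lra).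
  rewrite <- (sqrt_pow2 (s + t)) by lra. apply sqrt_le_1_alt.
  assert (Hcs : (p * q + a * b) ^ 2 <= (s * t) ^ 2).
  { replace ((s * t) ^ 2) with ((s * s) * (t * t)) by ring. rewrite Hs2, Ht2.
    pose proof (pow2_ge_0 (p * b - q * a)). nra. }
  assert (p * q + a * b <= s * t).
  { destruct (Rle_dec (p * q + a * b) (s * t)) as [? | Hn]; auto.
    pose proof (Rmult_le_pos s t Hs Ht). nra. }
  nra.
Qed.

Lemma minkowski_psum (a b : nat -> R) n :
  sqrt (psum (fun i => (a i + b i) ^ 2) n)
  <= sqrt (psum (fun i => a i ^ 2) n) + sqrt (psum (fun i => b i ^ 2) n).
Proof.
  induction n as [|n IH]; cbn [psum].
  - rewrite sqrt_0. lra.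
  - set (A := psum (fun i => a i ^ 2) n) in *. set (B := psum (fun i => b i ^ 2) n) in *.
    set (C := psum (fun i => (a i + b i) ^ 2) n) in *.
    assert (HA : 0 <= A) by (apply psum_nonneg; intros; apply pow2_ge_0).
    assert (HB : 0 <= B) by (apply psum_nonneg; intros; apply pow2_ge_0).
    assert (HC : 0 <= C) by (apply psum_nonneg; intros; apply pow2_ge_0).
    pose proof (minkowski_2d (sqrt A) (sqrt B) (a n) (b n) (sqrt_pos A) (sqrt_pos B)) as H.
    rewrite !pow2_sqrt in H by auto.
    eapply Rle_trans; [| exact H]. apply sqrt_le_1_alt.
    assert (C <= (sqrt A + sqrt B) ^ 2).
    { rewrite <- (pow2_sqrt C HC). apply pow_incr. split; [apply sqrt_pos | exact IH]. }
    lra.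
Qed.

Lemma l2dist_triangle x y z : in_l2 x -> in_l2 y -> in_l2 z ->
  l2dist x z <= l2dist x y + l2dist y z.
Proof.
  intros Hx Hy Hz. pose proof (l2dist_ge0 x y). pose proof (l2dist_ge0 y z).
  apply l2dist_le; [lra |]. intros n.
  assert (Hsqrt : forall u v, in_l2 u -> in_l2 v ->
             sqrt (psum (fun i => (u i - v i) ^ 2) n) <= l2dist u v).
  { intros u v Hu Hv. rewrite <- (sqrt_pow2 (l2dist u v)) by apply l2dist_ge0.
    apply sqrt_le_1_alt, psum_le_l2dist_sqr; auto. }
  pose proof (minkowski_psum (fun i => x i - y i) (fun i => y i - z i) n) as Hmk.
  rewrite (psum_ext _ (fun i => ((x i - y i) + (y i - z i)) ^ 2)) by (intros; unfold sqdiff; ring).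
  rewrite <- (pow2_sqrt (psum _ n)) by (apply psum_nonneg; intros; apply pow2_ge_0).
  apply pow_incr. split; [apply sqrt_pos |].
  pose proof (Hsqrt x y Hx Hy). pose proof (Hsqrt y z Hy Hz). lra.
Qed.

Lemma wval_bounds b : 1 <= wval b <= 2.
Proof. destruct b; simpl; lra. Qed.

Lemma psum_sqdiff_Bw w x y n :
  psum (sqdiff (Bw w x) (Bw w y)) n <= 4 * psum (sqdiff x y) (S n).
Proof.
  rewrite psum_shift, Rmult_plus_distr_l, <- psum_scal. pose proof (sqdiff_nonneg x y 0).
  enough (psum (sqdiff (Bw w x) (Bw w y)) n <= psum (fun i => 4 * sqdiff x y (S i)) n) by lra.
  apply psum_le_compat. intros i. unfold sqdiff, Bw.
  pose proof (wval_bounds (w i)). pose proof (pow2_ge_0 (x (S i) - y (S i))).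
  replace ((wval (w i) * x (S i) - wval (w i) * y (S i)) ^ 2)
    with (wval (w i) ^ 2 * (x (S i) - y (S i)) ^ 2) by ring.
  apply Rmult_le_compat_r; [lra | nra].
Qed.

Lemma in_l2_Bw w x : in_l2 x -> in_l2 (Bw w x).
Proof.
  intros Hx.
  destruct (ex_series_psum_bounded (sqdiff (Bw w x) (Bw w zero_seq))
              (4 * l2dist x zero_seq ^ 2)) as [He _].
  - apply sqdiff_nonneg.
  - intros n. eapply Rle_trans; [apply psum_sqdiff_Bw |].
    apply Rmult_le_compat_l; [lra |]. apply psum_le_l2dist_sqr; auto using in_l2_zero.
  - revert He. apply in_l2_ext. intros i. unfold sqdiff, Bw, zero_seq. ring.
Qed.

Lemma l2dist_Bw w x y : in_l2 x -> in_l2 y -> l2dist (Bw w x) (Bw w y) <= 2 * l2dist x y.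
Proof.
  intros Hx Hy. pose proof (l2dist_ge0 x y). apply l2dist_le; [lra |].
  intros n. eapply Rle_trans; [apply psum_sqdiff_Bw |].
  pose proof (psum_le_l2dist_sqr x y (S n) Hx Hy). lra.
Qed.

Lemma in_l2_iter_Bw w k x : in_l2 x -> in_l2 (Nat.iter k (Bw w) x).
Proof. intros Hx; induction k; simpl; auto using in_l2_Bw. Qed.

Lemma l2dist_iter_Bw w k x y : in_l2 x -> in_l2 y ->
  l2dist (Nat.iter k (Bw w) x) (Nat.iter k (Bw w) y) <= 2 ^ k * l2dist x y.
Proof.
  intros Hx Hy. induction k as [|k IH]; simpl Nat.iter; [simpl; lra |].
  eapply Rle_trans; [apply l2dist_Bw; apply in_l2_iter_Bw; auto |]. simpl. lra.
Qed.

Fixpoint wprod (w : weight) (i k : nat) : R :=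
  match k with O => 1 | S k' => wval (w i) * wprod w (S i) k' end.

Lemma iter_Bw_coord w k x i : Nat.iter k (Bw w) x i = wprod w i k * x (i + k)%nat.
Proof.
  revert x i. induction k as [|k IH]; intros x i.
  - simpl. rewrite Nat.add_0_r. ring.
  - simpl Nat.iter. unfold Bw at 1. rewrite IH. simpl wprod.
    replace (S i + k)%nat with (i + S k)%nat by lia. ring.
Qed.

Lemma wprod_ge1 w i k : 1 <= wprod w i k.
Proof.
  revert i. induction k as [|k IH]; intros i; simpl; [lra |].
  pose proof (IH (S i)). pose proof (wval_bounds (w i)). nra.
Qed.

Lemma wprod_le_pow2 w i k : wprod w i k <= 2 ^ k.
Proof.
  revert i. induction k as [|k IH]; intros i; simpl; [lra |].
  pose proof (IH (S i)). pose proof (wval_bounds (w i)). pose proof (wprod_ge1 w (S i) k). nra.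
Qed.

Lemma wprod_add w i a b : wprod w i (a + b) = wprod w i a * wprod w (i + a) b.
Proof.
  revert i. induction a as [|a IH]; intros i; simpl.
  - rewrite Nat.add_0_r. ring.
  - rewrite IH. replace (S i + a)%nat with (i + S a)%nat by lia. ring.
Qed.

Lemma wprod_eq v w i k : (forall j, (i <= j < i + k)%nat -> v j = w j) ->
  wprod v i k = wprod w i k.
Proof.
  revert i. induction k as [|k IH]; intros i H; simpl; auto.
  rewrite (H i) by lia. rewrite (IH (S i)); auto. intros j Hj; apply H; lia.
Qed.

Definition trunc (N : nat) (z : seqR) : seqR := fun i => if (i <? N)%nat then z i else 0.

Lemma in_l2_trunc N z : in_l2 (trunc N z).
Proof.
  apply (in_l2_finite_support _ N). intros i Hi. unfold trunc.
  destruct (Nat.ltb_spec i N); [lia | auto].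
Qed.

Lemma psum_mask u N n :
  psum (fun i => if (i <? N)%nat then 0 else u i) n = psum u n - psum u (Nat.min n N).
Proof.
  induction n as [|n IH]; cbn [psum]; [simpl; lra |].
  rewrite IH. destruct (Nat.ltb_spec n N).
  - rewrite !Nat.min_l by lia. cbn [psum]. lra.
  - rewrite !Nat.min_r by lia. lra.
Qed.

Lemma trunc_approx z eps : in_l2 z -> 0 < eps -> exists N, l2dist (trunc N z) z < eps.
Proof.
  intros Hz He.
  set (u := fun i => z i ^ 2).
  assert (Hu : forall i, 0 <= u i) by (intros; apply pow2_ge_0).
  assert (Hl : is_lim_seq (sum_n u) (Series u)) by exact (Series_correct u Hz).
  apply is_lim_seq_spec in Hl.
  assert (Hpos : 0 < (eps / 2) ^ 2) by (apply pow_lt; lra).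
  destruct (Hl (mkposreal _ Hpos)) as [N0 HN0]. simpl in HN0.
  specialize (HN0 N0 (le_n _)). rewrite sum_n_psum in HN0. apply Rabs_lt_between in HN0.
  exists (S N0). apply Rle_lt_trans with (eps / 2); [| lra].
  apply l2dist_le; [lra |]. intros n.
  rewrite (psum_ext _ (fun i => if (i <? S N0)%nat then 0 else u i))
    by (intros i; unfold sqdiff, trunc, u; destruct (i <? S N0)%nat; ring).
  rewrite psum_mask.
  pose proof (psum_le_Series u n Hu Hz).
  destruct (le_lt_dec n (S N0)).
  - rewrite Nat.min_l by lia. lra.
  - rewrite Nat.min_r by lia. lra.
Qed.

Lemma is_lim_seq_psum_sqdiff (x : nat -> seqR) (y z : seqR) n :
  (forall i, is_lim_seq (fun m => x m i) (z i)) ->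
  is_lim_seq (fun m => psum (sqdiff y (x m)) n) (psum (sqdiff y z) n).
Proof.
  intros Hz. induction n as [|n IH]; cbn [psum]; [apply is_lim_seq_const |].
  apply (is_lim_seq_plus' _ (fun m => sqdiff y (x m) n)); auto.
  unfold sqdiff. simpl.
  assert (Hd : is_lim_seq (fun m => y n - x m n) (y n - z n))
    by (apply is_lim_seq_minus'; [apply is_lim_seq_const | apply Hz]).
  apply is_lim_seq_mult'; [exact Hd |].
  apply is_lim_seq_mult'; [exact Hd | apply is_lim_seq_const].
Qed.

Lemma l2_complete (x : nat -> seqR) (e : nat -> R) :
  (forall m, in_l2 (x m)) ->
  (forall m m', (m <= m')%nat -> l2dist (x m) (x m') <= e m) ->
  (forall eps, 0 < eps -> exists m, e m < eps) ->
  exists z, in_l2 z /\ forall m, l2dist (x m) z <= e m.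
Proof.
  intros Hx He Hlim.
  assert (Hcoord : forall i, ex_finite_lim_seq (fun m => x m i)).
  { intros i. apply ex_lim_seq_cauchy_corr. intros [eps Heps].
    destruct (Hlim (eps / 2)) as [m0 Hm0]; [simpl; lra |].
    exists m0. intros n n' Hn Hn'. simpl.
    pose proof (l2dist_coord (x m0) (x n) i (Hx m0) (Hx n)).
    pose proof (l2dist_coord (x m0) (x n') i (Hx m0) (Hx n')).
    pose proof (He _ _ Hn). pose proof (He _ _ Hn').
    replace (x n i - x n' i) with (- (x m0 i - x n i) + (x m0 i - x n' i)) by ring.
    eapply Rle_lt_trans; [apply Rabs_triang |]. rewrite Rabs_Ropp. lra. }
  set (z := fun i => real (Lim_seq (fun m => x m i))).
  assert (Hz : forall i, is_lim_seq (fun m => x m i) (z i)).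
  { intros i. destruct (Hcoord i) as [l Hl]. unfold z. now rewrite (is_lim_seq_unique _ _ Hl). }
  assert (Hb : forall m n, psum (sqdiff (x m) z) n <= e m ^ 2).
  { intros m n.
    refine (is_lim_seq_le_loc _ (fun _ => e m ^ 2) _ _ _
              (is_lim_seq_psum_sqdiff x (x m) z n Hz) (is_lim_seq_const _)).
    exists m. intros m' Hm'.
    apply Rle_trans with (l2dist (x m) (x m') ^ 2); [apply psum_le_l2dist_sqr; auto |].
    apply pow_incr. split; [apply l2dist_ge0 | auto]. }
  assert (He0 : forall m, 0 <= e m)
    by (intros m; apply Rle_trans with (l2dist (x m) (x m)); [apply l2dist_ge0 | auto]).
  assert (Hdiff : in_l2 (fun i => x O i - z i))
    by exact (proj1 (ex_series_psum_bounded _ _ (sqdiff_nonneg (x O) z) (Hb O))).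
  exists z. split.
  - apply (in_l2_ext (fun i => 1 * x O i + -1 * (x O i - z i))); [intros; ring |].
    now apply in_l2_lin.
  - intros m. now apply l2dist_le.
Qed.

Lemma wprod_le_len w i k k' : (k <= k')%nat -> wprod w i k <= wprod w i k'.
Proof.
  intros H. replace k' with (k + (k' - k))%nat by lia. rewrite wprod_add.
  pose proof (wprod_ge1 w i k). pose proof (wprod_ge1 w (i + k) (k' - k)). nra.
Qed.

(* A dense orbit must reach near [(T, 0, 0, ...)] for every [T], and the first
   coordinate of [B_w^k x] is [wprod w 0 k * x k] with [x k] bounded. *)
Lemma HC_wprod_unbounded w x : HC w x -> forall M, exists k, M < wprod w 0 k.
Proof.
  intros [Hx Hdense] M. apply NNPP. intros Hbounded.
  assert (Hall : forall k, wprod w 0 k <= M)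
    by (intros k; apply Rnot_lt_le; intros Hk; apply Hbounded; now exists k).
  set (Dx := l2dist x zero_seq). assert (0 <= Dx) by apply l2dist_ge0.
  pose proof (Rle_trans _ _ _ (wprod_ge1 w 0 0) (Hall 0%nat)).
  set (T := M * Dx + 2).
  set (t := fun i => if (i =? 0)%nat then T else 0).
  assert (Ht : in_l2 t).
  { apply (in_l2_finite_support _ 1). intros i Hi. unfold t.
    destruct (Nat.eqb_spec i 0); [lia | auto]. }
  destruct (Hdense t 1 Ht ltac:(lra)) as [k Hk].
  pose proof (l2dist_coord _ _ 0 (in_l2_iter_Bw w k x Hx) Ht) as Hfirst.
  rewrite iter_Bw_coord in Hfirst. simpl in Hfirst.
  pose proof (l2dist_coord x zero_seq k Hx in_l2_zero) as Hxk.
  unfold zero_seq in Hxk. rewrite Rminus_0_r in Hxk. fold Dx in Hxk.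
  pose proof (Hall k). pose proof (wprod_ge1 w 0 k).
  assert (Habs : Rabs (wprod w 0 k * x k) <= M * Dx).
  { rewrite Rabs_mult, (Rabs_right (wprod w 0 k)) by lra.
    apply Rmult_le_compat; auto using Rabs_pos; lra. }
  apply Rabs_le_between in Habs.
  replace (t 0%nat) with T in Hfirst by reflexivity.
  rewrite Rabs_left in Hfirst by (unfold T; lra). unfold T in Hfirst. lra.
Qed.

Lemma HC_wprod_large w x : HC w x -> forall M m K, exists k, (K <= k)%nat /\
  forall i, (i < m)%nat -> M < wprod w i k.
Proof.
  intros Hhc M m K.
  destruct (HC_wprod_unbounded w x Hhc (M * 2 ^ m)) as [k0 Hk0].
  exists (k0 + K)%nat. split; [lia |]. intros i Hi.
  pose proof (wprod_add w 0 i (k0 + K)) as Hsplit. simpl in Hsplit.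
  pose proof (wprod_le_len w 0 k0 (i + (k0 + K)) ltac:(lia)).
  pose proof (wprod_le_pow2 w 0 i). pose proof (wprod_ge1 w i (k0 + K)).
  assert (2 ^ i <= 2 ^ m) by (apply Rle_pow; [lra | lia]).
  assert (0 < 2 ^ m) by (apply pow_lt; lra).
  assert (M * 2 ^ m < 2 ^ m * wprod w i (k0 + K)) by nra.
  nra.
Qed.

Definition zrange (B : nat) : list Z :=
  map (fun j => (Z.of_nat j - Z.of_nat B)%Z) (seq 0 (2 * B + 1)).

Fixpoint zlists (B : nat) (n : nat) : list (list Z) :=
  match n with
  | O => nil :: nil
  | S k => flat_map (fun z => map (cons z) (zlists B k)) (zrange B)
  end.

Lemma in_zrange B z : (- Z.of_nat B <= z <= Z.of_nat B)%Z -> In z (zrange B).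
Proof.
  intros H. unfold zrange. apply in_map_iff. exists (Z.to_nat (z + Z.of_nat B)).
  split; [rewrite Z2Nat.id by lia; lia | apply in_seq; lia].
Qed.

Lemma in_zlists B n l : length l = n ->
  (forall z, In z l -> (- Z.of_nat B <= z <= Z.of_nat B)%Z) -> In l (zlists B n).
Proof.
  revert l. induction n as [|n IH]; intros l Hl Hz.
  - destruct l; simpl in *; [auto | lia].
  - destruct l as [|z l]; simpl in Hl; [lia |]. simpl. apply in_flat_map. exists z. split.
    + apply in_zrange, Hz. now left.
    + apply in_map, IH; [lia |]. intros; apply Hz; now right.
Qed.

Lemma zlists_length B n l : In l (zlists B n) -> length l = n.
Proof.
  revert l. induction n as [|n IH]; intros l H; simpl in H.
  - destruct H as [<- | []]. reflexivity.
  - apply in_flat_map in H. destruct H as [z [_ H]]. apply in_map_iff in H.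
    destruct H as [l' [<- H]]. simpl. f_equal. auto.
Qed.

(* The targets of level [n]: sequences supported on [0, n) whose entries are
   multiples of [1/(n+1)] of modulus at most [n+1]. *)
Definition grid_point (n : nat) (l : list Z) : seqR :=
  fun i => IZR (nth i l 0%Z) / INR (S n).

Definition grid (n : nat) : list seqR := map (grid_point n) (zlists (S n * S n) n).

Lemma grid_support n t i : In t (grid n) -> (n <= i)%nat -> t i = 0.
Proof.
  intros Ht Hi. apply in_map_iff in Ht. destruct Ht as [l [<- Hl]].
  unfold grid_point. rewrite nth_overflow; [simpl; lra |].
  rewrite (zlists_length _ _ _ Hl). exact Hi.
Qed.

Lemma in_l2_grid n t : In t (grid n) -> in_l2 t.
Proof. intros Ht. apply (in_l2_finite_support _ n). intros; now apply (grid_support n). Qed.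

Definition round_trunc (q : R) (N : nat) (z : seqR) : nat -> Z :=
  fun i => if (i <? N)%nat then Int_part (q * z i) else 0%Z.

Definition grid_round (n N : nat) (z : seqR) : seqR :=
  grid_point n (map (round_trunc (INR (S n)) N z) (seq 0 n)).

Lemma grid_round_coord n N z i : (N <= n)%nat ->
  grid_round n N z i = IZR (round_trunc (INR (S n)) N z i) / INR (S n).
Proof.
  intros HN. unfold grid_round, grid_point. f_equal. f_equal.
  destruct (lt_dec i n).
  - rewrite (nth_indep _ 0%Z (round_trunc (INR (S n)) N z 0))
      by (rewrite length_map, length_seq; lia).
    now rewrite map_nth, seq_nth by lia.
  - rewrite nth_overflow by (rewrite length_map, length_seq; lia).
    unfold round_trunc. destruct (Nat.ltb_spec i N); [lia | reflexivity].
Qed.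

Lemma grid_round_in_grid n N z : (forall j, Rabs (z j) <= INR n) ->
  In (grid_round n N z) (grid n).
Proof.
  intros Hz. unfold grid_round. apply in_map, in_zlists; [now rewrite length_map, length_seq |].
  intros k Hk. apply in_map_iff in Hk. destruct Hk as [i [<- _]].
  set (q := INR (S n)). assert (Hq : q = INR n + 1) by apply S_INR.
  unfold round_trunc. destruct (i <? N)%nat; [| lia].
  destruct (base_Int_part (q * z i)) as [Hlo Hhi].
  specialize (Hz i). apply Rabs_le_between in Hz. pose proof (pos_INR n).
  assert (- (q * (q - 1)) <= q * z i <= q * (q - 1)) by (split; nra).
  assert (Eq : q * q = IZR (Z.of_nat (S n * S n)))
    by (rewrite <- INR_IZR_INZ, mult_INR; reflexivity).
  assert (IZR (Int_part (q * z i)) <= IZR (Z.of_nat (S n * S n))) as Hup by nra.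
  assert (IZR (- Z.of_nat (S n * S n)) <= IZR (Int_part (q * z i))) as Hdown
    by (rewrite opp_IZR; nra).
  apply le_IZR in Hup. apply le_IZR in Hdown. lia.
Qed.

Lemma l2dist_grid_round n N z : (N <= n)%nat ->
  l2dist (grid_round n N z) (trunc N z) <= sqrt (INR N) / INR (S n).
Proof.
  intros HN. set (q := INR (S n)). assert (Hq : 0 < q) by apply lt_0_INR, Nat.lt_0_succ.
  assert (HC : 0 <= sqrt (INR N) / q) by (apply Rle_mult_inv_pos; [apply sqrt_pos | lra]).
  apply l2dist_le; auto. intros m.
  apply Rle_trans with (psum (sqdiff (grid_round n N z) (trunc N z)) N).
  { apply psum_finite_support; [apply sqdiff_nonneg |]. intros i Hi.
    unfold sqdiff, trunc. rewrite grid_round_coord by auto. unfold round_trunc.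
    destruct (Nat.ltb_spec i N); [lia |]. unfold Rdiv. simpl. ring. }
  replace ((sqrt (INR N) / q) ^ 2) with (INR N * (/ q) ^ 2)
    by (rewrite <- (pow2_sqrt (INR N)) at 1 by apply pos_INR; field; lra).
  apply psum_le_const. intros i. unfold sqdiff, trunc.
  rewrite grid_round_coord by auto. fold q. unfold round_trunc. destruct (i <? N)%nat.
  - destruct (base_Int_part (q * z i)) as [Hlo Hhi].
    replace (IZR (Int_part (q * z i)) / q - z i)
      with ((IZR (Int_part (q * z i)) - q * z i) * / q) by (field; lra).
    rewrite Rpow_mult_distr. pose proof (pow2_ge_0 (/ q)).
    assert ((IZR (Int_part (q * z i)) - q * z i) ^ 2 <= 1) by nra.
    nra.
  - replace (IZR 0 / q - 0) with 0 by (simpl; field; lra). simpl. nra.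
Qed.

Lemma grid_dense z eps n0 : in_l2 z -> 0 < eps ->
  exists n t, (n0 <= n)%nat /\ In t (grid n) /\ l2dist t z + / INR (S n) < eps.
Proof.
  intros Hz He.
  destruct (trunc_approx z (eps / 4) Hz) as [N HN]; [lra |].
  set (Dz := l2dist z zero_seq).
  assert (Hzi : forall i, Rabs (z i) <= Dz).
  { intros i. pose proof (l2dist_coord z zero_seq i Hz in_l2_zero) as Hi.
    unfold zero_seq in Hi. now rewrite Rminus_0_r in Hi. }
  assert (0 <= Dz) by apply l2dist_ge0. pose proof (pos_INR N). pose proof (pos_INR n0).
  assert (H4 : 0 <= 4 * (sqrt (INR N) + 1) / eps)
    by (apply Rle_mult_inv_pos; [pose proof (sqrt_pos (INR N)) |]; lra).
  destruct (INR_unbounded (4 * (sqrt (INR N) + 1) / eps + Dz + INR n0 + INR N)) as [n Hn].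
  assert (HNn : (N <= n)%nat) by (apply INR_le; lra).
  assert (Hq : INR (S n) = INR n + 1) by apply S_INR.
  assert (Hqeps : 4 * (sqrt (INR N) + 1) / eps * eps < INR (S n) * eps)
    by (apply Rmult_lt_compat_r; lra).
  replace (4 * (sqrt (INR N) + 1) / eps * eps) with (4 * (sqrt (INR N) + 1)) in Hqeps
    by (field; lra).
  assert (Hsmall : sqrt (INR N) / INR (S n) + / INR (S n) < eps / 4)
    by (apply (Rmult_lt_reg_r (4 * INR (S n))); [lra |]; field_simplify; lra).
  exists n, (grid_round n N z). split; [apply INR_le; lra |].
  assert (Hgrid : In (grid_round n N z) (grid n))
    by (apply grid_round_in_grid; intros j; specialize (Hzi j); lra).
  split; [exact Hgrid |].
  pose proof (l2dist_grid_round n N z HNn).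
  pose proof (l2dist_triangle _ _ _ (in_l2_grid n _ Hgrid) (in_l2_trunc N z) Hz).
  lra.
Qed.

Record ball := Ball { center : seqR; radius : R }.

Definition in_ball (b : ball) (x : seqR) : Prop := l2dist (center b) x <= radius b.

Definition subball (b' b : ball) : Prop :=
  l2dist (center b) (center b') + radius b' <= radius b.

(* [b'] stays inside [b] even with its radius doubled; this margin makes the limit
   set of a scheme of such balls closed. *)
Definition strict_subball (b' b : ball) : Prop :=
  0 < radius b' /\ l2dist (center b) (center b') + 2 * radius b' <= radius b.

Definition ball_disj (b1 b2 : ball) : Prop :=
  radius b1 + radius b2 < l2dist (center b1) (center b2).

Section Balls.

Variables b b' b'' : ball.
Hypotheses (Hb : in_l2 (center b)) (Hb' : in_l2 (center b')) (Hb'' : in_l2 (center b'')).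

Lemma in_subball x : in_l2 x -> subball b' b -> in_ball b' x -> in_ball b x.
Proof.
  unfold in_ball, subball. intros Hx H1 H2.
  pose proof (l2dist_triangle _ _ _ Hb Hb' Hx). lra.
Qed.

Lemma subball_trans : subball b'' b' -> subball b' b -> subball b'' b.
Proof.
  unfold subball. intros H1 H2. pose proof (l2dist_triangle _ _ _ Hb Hb' Hb''). lra.
Qed.

Lemma strict_subball_trans : 0 < radius b'' -> subball b'' b' -> strict_subball b' b ->
  strict_subball b'' b.
Proof.
  unfold subball, strict_subball. intros H0 H1 [_ H2]. split; auto.
  pose proof (l2dist_triangle _ _ _ Hb Hb' Hb''). pose proof (l2dist_ge0 (center b') (center b'')).
  lra.
Qed.

End Balls.

Lemma subball_refl b : subball b b.
Proof. unfold subball. rewrite l2dist_refl. lra. Qed.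

Lemma strict_subball_subball b' b : strict_subball b' b -> subball b' b.
Proof. unfold strict_subball, subball. lra. Qed.

Lemma ball_disj_subball b1 b2 b1' b2' :
  in_l2 (center b1) -> in_l2 (center b2) -> in_l2 (center b1') -> in_l2 (center b2') ->
  subball b1' b1 -> subball b2' b2 -> ball_disj b1 b2 -> ball_disj b1' b2'.
Proof.
  unfold subball, ball_disj. intros H1 H2 H1' H2' Hs1 Hs2 Hd.
  pose proof (l2dist_triangle (center b1) (center b1') (center b2) H1 H1' H2).
  pose proof (l2dist_triangle (center b1') (center b2') (center b2) H1' H2' H2).
  rewrite (l2dist_sym (center b2') (center b2)) in *. lra.
Qed.

Lemma ball_disj_neq b1 b2 x y : in_l2 (center b1) -> in_l2 (center b2) -> in_l2 x ->
  ball_disj b1 b2 -> in_ball b1 x -> in_ball b2 y -> x <> y.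
Proof.
  unfold ball_disj, in_ball. intros H1 H2 Hx Hd Hbx Hby <-.
  pose proof (l2dist_triangle _ _ _ H1 Hx H2). rewrite (l2dist_sym x (center b2)) in *. lra.
Qed.

Lemma in_ball_l2dist b x y : in_l2 (center b) -> in_l2 x -> in_l2 y ->
  in_ball b x -> in_ball b y -> l2dist x y <= 2 * radius b.
Proof.
  unfold in_ball. intros Hb Hx Hy Hbx Hby.
  pose proof (l2dist_triangle _ _ _ Hx Hb Hy). rewrite (l2dist_sym x (center b)) in *. lra.
Qed.

Fixpoint addresses (n : nat) : list (list bool) :=
  match n with
  | O => nil :: nil
  | S n => flat_map (fun s => (true :: s) :: (false :: s) :: nil) (addresses n)
  end.

Lemma in_addresses s : In s (addresses (length s)).
Proof.
  induction s as [|b s IH]; simpl; [now left |].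
  apply in_flat_map. exists s. split; auto. destruct b; simpl; auto.
Qed.

Lemma list_min_pos {A : Type} (L : list A) (r : A -> R) : (forall a, In a L -> 0 < r a) ->
  exists d, 0 < d /\ forall a, In a L -> d <= r a.
Proof.
  induction L as [|a L IH]; intros H.
  - exists 1. split; [lra | intros _ []].
  - destruct IH as [d [Hd HL]]; [intros; apply H; now right |].
    exists (Rmin d (r a)). split; [apply Rmin_pos; auto; apply H; now left |].
    intros a' [<- | Ha']; [apply Rmin_r |].
    eapply Rle_trans; [apply Rmin_l | auto].
Qed.

Lemma pow_half_small eps : 0 < eps -> exists N, forall n, (N <= n)%nat -> (/ 2) ^ n < eps.
Proof.
  intros He. destruct (pow_lt_1_zero (/ 2)) with eps as [N HN]; auto.
  { rewrite Rabs_right; lra. }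
  exists N. intros n Hn. specialize (HN n Hn).
  rewrite Rabs_right in HN; auto. apply Rle_ge, pow_le. lra.
Qed.

Section CantorScheme.

Variable B : list bool -> ball.
Hypothesis center_l2 : forall s, in_l2 (center (B s)).
Hypothesis radius_pos : forall s, 0 < radius (B s).
Hypothesis radius_small : forall s, radius (B s) <= (/ 2) ^ length s.
Hypothesis child_strict_subball : forall b s, strict_subball (B (b :: s)) (B s).
Hypothesis children_disj : forall s, ball_disj (B (true :: s)) (B (false :: s)).

Definition scheme_limit (x : seqR) : Prop :=
  in_l2 x /\ forall n, exists s, length s = n /\ in_ball (B s) x.

Lemma in_ball_suffix t s x : in_l2 x -> in_ball (B (t ++ s)) x -> in_ball (B s) x.
Proof.
  intros Hx. induction t as [|b t IH]; simpl; auto.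
  intros H. apply IH. apply (in_subball (B (t ++ s)) (B (b :: t ++ s))); auto.
  now apply strict_subball_subball.
Qed.

Lemma in_ball_level s x n : in_l2 x -> in_ball (B s) x -> (n <= length s)%nat ->
  exists t, length t = n /\ in_ball (B t) x.
Proof.
  intros Hx Hs Hn. exists (skipn (length s - n) s). split.
  - rewrite length_skipn. lia.
  - apply (in_ball_suffix (firstn (length s - n) s)); auto. now rewrite firstn_skipn.
Qed.

(* The limit of the branch [s, false :: s, false :: false :: s, ...]. *)
Lemma scheme_limit_in_ball s : exists x, scheme_limit x /\ in_ball (B s) x.
Proof.
  set (branch := fun m => B (repeat false m ++ s)).
  assert (Hnest : forall m d, subball (branch (m + d)%nat) (branch m)).
  { intros m d. induction d as [|d IH]; [rewrite Nat.add_0_r; apply subball_refl |].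
    apply (subball_trans _ (branch (m + d)%nat)); try apply center_l2; auto.
    unfold branch. replace (m + S d)%nat with (S (m + d)) by lia.
    apply strict_subball_subball, child_strict_subball. }
  destruct (l2_complete (fun m => center (branch m)) (fun m => radius (branch m)))
    as [x [Hx Hdist]].
  - intros m. apply center_l2.
  - intros m m' Hm. replace m' with (m + (m' - m))%nat by lia.
    pose proof (Hnest m (m' - m)%nat). pose proof (radius_pos (repeat false (m + (m' - m)) ++ s)).
    unfold subball, branch in *. lra.
  - intros eps Heps. destruct (pow_half_small eps Heps) as [N HN]. exists N.
    eapply Rle_lt_trans; [apply radius_small |]. apply HN.
    rewrite length_app, repeat_length. lia.
  - exists x. split; [split; auto | exact (Hdist 0%nat)]. intros n.
    apply (in_ball_level (repeat false n ++ s)); auto; [apply Hdist |].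
    rewrite length_app, repeat_length. lia.
Qed.

Lemma scheme_limit_closed : l2_closed scheme_limit.
Proof.
  split; [now intros x [] |]. intros x Hx Hlim. split; auto. intros n.
  destruct (list_min_pos (addresses (S n)) (fun s => radius (B s))) as [d [Hd Hmin]].
  { intros; apply radius_pos. }
  destruct (Hlim d Hd) as [y [[Hy HPy] Hxy]].
  destruct (HPy (S n)) as [[| b s] [Hlen Hys]]; [discriminate |].
  injection Hlen as Hlen. exists s. split; auto.
  pose proof (Hmin (b :: s)) as Hr. rewrite <- Hlen in Hr. specialize (Hr (in_addresses _)).
  destruct (child_strict_subball b s) as [_ Hs].
  pose proof (l2dist_triangle (center (B s)) (center (B (b :: s))) x
                (center_l2 _) (center_l2 _) Hx).
  pose proof (l2dist_triangle (center (B (b :: s))) y x (center_l2 _) Hy Hx).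
  unfold in_ball in *. rewrite l2dist_sym in Hxy. lra.
Qed.

Lemma scheme_limit_no_isolated x : scheme_limit x -> forall eps, 0 < eps ->
  exists y, scheme_limit y /\ y <> x /\ l2dist x y < eps.
Proof.
  intros [Hx HPx] eps Heps.
  destruct (pow_half_small (eps / 2)) as [N HN]; [lra |].
  destruct (HPx (S N)) as [[| b s] [Hlen Hxs]]; [discriminate |]. injection Hlen as Hlen.
  destruct (scheme_limit_in_ball (negb b :: s)) as [y [[Hy HPy] Hys]].
  exists y. split; [split; auto | split].
  - intros ->. destruct b; simpl in Hys.
    + exact (ball_disj_neq _ _ x x (center_l2 _) (center_l2 _) Hx (children_disj s) Hxs Hys eq_refl).
    + exact (ball_disj_neq _ _ x x (center_l2 _) (center_l2 _) Hx (children_disj s) Hys Hxs eq_refl).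
  - assert (Hsub : forall b', subball (B (b' :: s)) (B s))
      by (intros; apply strict_subball_subball, child_strict_subball).
    pose proof (in_ball_l2dist (B s) x y (center_l2 _) Hx Hy
                  (in_subball _ _ (center_l2 _) (center_l2 _) x Hx (Hsub b) Hxs)
                  (in_subball _ _ (center_l2 _) (center_l2 _) y Hy (Hsub (negb b)) Hys)).
    pose proof (radius_small s). specialize (HN (length s) ltac:(lia)). lra.
Qed.

Lemma scheme_limit_perfect : l2_perfect scheme_limit.
Proof.
  split; [exact scheme_limit_closed | split].
  - destruct (scheme_limit_in_ball nil) as [x [Hx _]]. now exists x.
  - exact scheme_limit_no_isolated.
Qed.

Lemma scheme_limit_separated x y : scheme_limit x -> scheme_limit y -> x <> y ->
  exists N, forall s t, (N <= length s)%nat ->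
    in_ball (B s) x -> in_ball (B t) y -> s <> t.
Proof.
  intros [Hx _] [Hy _] Hxy.
  assert (Hpos : 0 < l2dist x y).
  { destruct (Rle_lt_or_eq_dec _ _ (l2dist_ge0 x y)) as [| E]; auto.
    exfalso. apply Hxy, l2dist_eq0; auto. }
  destruct (pow_half_small (l2dist x y / 2)) as [N HN]; [lra |].
  exists N. intros s t HN' Hxs Hyt <-.
  pose proof (in_ball_l2dist (B s) x y (center_l2 _) Hx Hy Hxs Hyt).
  pose proof (radius_small s). specialize (HN _ HN'). lra.
Qed.

End CantorScheme.
Lemma cont_on_prefix G f y : cont_on G f -> G y -> forall N, exists eps, 0 < eps /\
  forall z, G z -> l2dist y z < eps -> forall j, (j < N)%nat -> f z j = f y j.
Proof.
  intros Hc Hy N. induction N as [|N [e1 [He1 H1]]].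
  - exists 1. split; [lra | intros; lia].
  - destruct (Hc y Hy N) as [e2 [He2 H2]].
    exists (Rmin e1 e2). split; [now apply Rmin_pos |].
    intros z Hz Hd j Hj.
    pose proof (Rmin_l e1 e2). pose proof (Rmin_r e1 e2).
    destruct (Nat.eq_dec j N) as [-> | Hne]; [apply H2 | apply H1]; auto; lra || lia.
Qed.

(* [plant K k m w a c] agrees with [a] below [K] and carries [c(i) / wprod w i k]
   at [k + i] for [i < m]: this is what [B_w^k] maps onto [c]. *)
Definition plant (K k m : nat) (w : weight) (a c : seqR) : seqR :=
  fun j => trunc K a j +
    (if ((k <=? j) && (j <? k + m))%nat then c (j - k)%nat / wprod w (j - k) k else 0).

Lemma in_l2_plant K k m w a c : in_l2 (plant K k m w a c).
Proof.
  apply (in_l2_finite_support _ (Nat.max K (k + m))). intros j Hj.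
  unfold plant, trunc. destruct (Nat.ltb_spec j K); [lia |].
  destruct (Nat.ltb_spec j (k + m)); [lia |]. rewrite andb_false_r. ring.
Qed.

Lemma iter_Bw_plant K k m w v a c : (K <= k)%nat -> (forall i, (m <= i)%nat -> c i = 0) ->
  (forall j, (j < k + m)%nat -> v j = w j) -> Nat.iter k (Bw v) (plant K k m w a c) = c.
Proof.
  intros HK Hc Hvw. apply functional_extensionality. intros i.
  rewrite iter_Bw_coord. unfold plant, trunc.
  destruct (Nat.ltb_spec (i + k) K); [lia |].
  destruct (Nat.leb_spec k (i + k)); [| lia].
  replace (i + k - k)%nat with i by lia.
  destruct (Nat.ltb_spec (i + k) (k + m)); simpl.
  - rewrite (wprod_eq v w) by (intros; apply Hvw; lia).
    pose proof (wprod_ge1 w i k). field. lra.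
  - rewrite Hc by lia. ring.
Qed.

Lemma l2dist_trunc_plant K k m w a c M : in_l2 c -> 0 < M ->
  (forall i, (i < m)%nat -> M < wprod w i k) ->
  l2dist (trunc K a) (plant K k m w a c) <= l2dist c zero_seq / M.
Proof.
  intros Hc HM Hw.
  assert (0 <= l2dist c zero_seq / M) by (apply Rle_mult_inv_pos; [apply l2dist_ge0 | lra]).
  apply l2dist_le; auto. intros n.
  set (d := fun j => if ((k <=? j) && (j <? k + m))%nat then c (j - k)%nat / wprod w (j - k) k else 0).
  rewrite (psum_ext _ (fun j => d j ^ 2)) by (intros; unfold sqdiff, plant, d; ring).
  apply Rle_trans with (psum (fun j => d j ^ 2) (k + m)).
  { apply psum_finite_support; [intros; apply pow2_ge_0 |]. intros i Hi. unfold d.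
    destruct (Nat.ltb_spec i (k + m)); [lia |]. rewrite andb_false_r. ring. }
  rewrite psum_add, psum_zero, Rplus_0_l.
  2: { intros i Hi. unfold d. destruct (Nat.leb_spec k i); [lia |]. simpl. ring. }
  apply Rle_trans with (psum (fun i => / M ^ 2 * sqdiff c zero_seq i) m).
  { apply psum_le_compat. intros i. unfold d, sqdiff, zero_seq. rewrite Rminus_0_r.
    destruct (Nat.leb_spec k (k + i)); [| lia].
    destruct (Nat.ltb_spec (k + i) (k + m)); cbn [andb].
    - replace (k + i - k)%nat with i by lia.
      specialize (Hw i ltac:(lia)).
      replace ((c i / wprod w i k) ^ 2) with (/ wprod w i k ^ 2 * c i ^ 2) by (field; lra).
      apply Rmult_le_compat_r; [apply pow2_ge_0 |].
      apply Rinv_le_contravar; [apply pow_lt; lra | apply pow_incr; lra].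
    - rewrite pow_i by lia. pose proof (pow2_ge_0 (c i)).
      assert (0 < / M ^ 2) by (apply Rinv_0_lt_compat, pow_lt; lra). nra. }
  rewrite psum_scal.
  pose proof (psum_le_l2dist_sqr c zero_seq m Hc in_l2_zero).
  replace ((l2dist c zero_seq / M) ^ 2) with (/ M ^ 2 * l2dist c zero_seq ^ 2) by (field; lra).
  apply Rmult_le_compat_l; [| lra]. apply Rlt_le, Rinv_0_lt_compat, pow_lt; lra.
Qed.

(* The heart of the construction: as the products of the weights are unbounded,
   a small perturbation of [a] far out is mapped by some [B_w^k] exactly onto a
   given finitely supported [c], and so it is under every weight sharing a long
   enough prefix with [w]. *)
Lemma HC_near_preimage w x a c m eps : HC w x -> in_l2 a -> in_l2 c ->
  (forall i, (m <= i)%nat -> c i = 0) -> 0 < eps ->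
  exists k xs, in_l2 xs /\ l2dist a xs < eps /\
    forall v, (forall j, (j < k + m)%nat -> v j = w j) -> Nat.iter k (Bw v) xs = c.
Proof.
  intros Hhc Ha Hc Hcm Heps.
  destruct (trunc_approx a (eps / 2) Ha) as [K HK]; [lra |].
  set (Dc := l2dist c zero_seq). assert (0 <= Dc) by apply l2dist_ge0.
  set (M := 2 * (Dc + 1) / eps).
  assert (HM : 0 < M) by (apply Rdiv_lt_0_compat; lra).
  destruct (HC_wprod_large w x Hhc M m K) as [k [HKk Hk]].
  exists k, (plant K k m w a c). split; [apply in_l2_plant | split].
  - pose proof (l2dist_trunc_plant K k m w a c M Hc HM Hk) as Hplant. fold Dc in Hplant.
    pose proof (l2dist_triangle a (trunc K a) (plant K k m w a c) Ha (in_l2_trunc K a)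
                  (in_l2_plant K k m w a c)).
    rewrite l2dist_sym in HK.
    assert (Dc / M < eps / 2).
    { unfold M. replace (Dc / (2 * (Dc + 1) / eps)) with (eps / 2 * (Dc / (Dc + 1))) by (field; lra).
      assert (Dc / (Dc + 1) < 1) by (apply (Rmult_lt_reg_r (Dc + 1)); [lra |]; field_simplify; lra).
      nra. }
    lra.
  - intros v Hv. now apply iter_Bw_plant.
Qed.

Lemma exists_at_l2dist c d : in_l2 c -> 0 <= d -> exists p, in_l2 p /\ l2dist c p = d.
Proof.
  intros Hc Hd.
  set (e0 := fun i => if (i =? 0)%nat then d else 0).
  assert (He0 : in_l2 e0).
  { apply (in_l2_finite_support _ 1). intros i Hi. unfold e0. destruct (Nat.eqb_spec i 0); [lia | auto]. }
  exists (fun i => c i + e0 i). split; [now apply in_l2_plus |].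
  apply Rle_antisym.
  - apply l2dist_le; auto. intros n. eapply Rle_trans.
    + apply (psum_finite_support _ 1); [apply sqdiff_nonneg |].
      intros i Hi. unfold sqdiff, e0. destruct (Nat.eqb_spec i 0); [lia | ring].
    + unfold sqdiff, e0. simpl. lra.
  - pose proof (l2dist_coord c _ 0 Hc (in_l2_plus c e0 Hc He0)) as H0.
    unfold e0 in H0. simpl in H0.
    replace (c 0%nat - (c 0%nat + d)) with (- d) in H0 by ring.
    now rewrite Rabs_Ropp, Rabs_right in H0 by lra.
Qed.

Definition requirements (n : nat) : list (list bool * list bool * seqR) :=
  flat_map (fun s => flat_map (fun t =>
      if list_eq_dec bool_dec s t then nil else map (fun c => (s, t, c)) (grid n))
    (addresses n)) (addresses n).

Lemma addresses_length n s : In s (addresses n) -> length s = n.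
Proof.
  revert s. induction n as [|n IH]; simpl; intros s Hs.
  - now destruct Hs as [<- | []].
  - apply in_flat_map in Hs. destruct Hs as [s' [Hs' [<- | [<- | []]]]]; simpl; f_equal; auto.
Qed.

Lemma in_requirements n s t c :
  In (s, t, c) (requirements n) <-> length s = n /\ length t = n /\ s <> t /\ In c (grid n).
Proof.
  unfold requirements. rewrite in_flat_map. split.
  - intros [s' [Hs' Hin]]. apply in_flat_map in Hin. destruct Hin as [t' [Ht' Hin]].
    destruct (list_eq_dec bool_dec s' t') as [| Hne]; [destruct Hin |].
    apply in_map_iff in Hin. destruct Hin as [c' [E Hc]]. injection E as <- <- <-.
    auto using addresses_length.
  - intros (<- & Ht & Hst & Hc). exists s. split; [apply in_addresses |].
    apply in_flat_map. exists t. split; [rewrite <- Ht; apply in_addresses |].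
    destruct (list_eq_dec bool_dec s t); [contradiction | now apply in_map].
Qed.

Definition update (F : list bool -> ball) (s : list bool) (b : ball) : list bool -> ball :=
  fun t => if list_eq_dec bool_dec t s then b else F t.

Lemma update_eq F s b : update F s b s = b.
Proof. unfold update. now destruct (list_eq_dec bool_dec s s). Qed.

Lemma update_neq F s b t : t <> s -> update F s b t = F t.
Proof. intros H. unfold update. now destruct (list_eq_dec bool_dec t s). Qed.

Section Construction.

Variables (G : seqR -> Prop) (f : seqR -> weight) (Us : nat -> seqR -> Prop).
Hypothesis G_dense : l2_dense G.
Hypothesis f_cont : cont_on G f.
Hypothesis HC_nonempty : forall y, G y -> exists x, HC (f y) x.
Hypothesis Us_open : forall n, l2_open (Us n).
Hypothesis G_sub_Us : forall x, G x -> forall n, Us n x.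

Let G_l2 : forall y, G y -> in_l2 y := proj1 G_dense.

Definition steers (b1 b2 : ball) (t : seqR) (e : R) : Prop :=
  forall x y, in_l2 x -> in_ball b1 x -> G y -> in_ball b2 y ->
    exists k, l2dist (Nat.iter k (Bw (f y)) x) t < e.

Definition good_ball (b : ball) : Prop := G (center b) /\ 0 < radius b.

Lemma steers_subball b1 b2 b1' b2' t e : good_ball b1 -> good_ball b2 ->
  good_ball b1' -> good_ball b2' -> subball b1' b1 -> subball b2' b2 ->
  steers b1 b2 t e -> steers b1' b2' t e.
Proof.
  intros [G1 _] [G2 _] [G1' _] [G2' _] Hs1 Hs2 Hst x y Hx Hx1 Gy Hy2.
  apply Hst; auto.
  - apply (in_subball b1 b1'); auto using G_l2.
  - apply (in_subball b2 b2'); auto using G_l2.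
Qed.

(* For [y] close to the centre [b] of [b2], the first [k + m] weights of [f y] are
   those of [f b], which is all that [HC_near_preimage] requires. *)
Lemma steers_refine b1 b2 c m r : good_ball b1 -> good_ball b2 -> in_l2 c ->
  (forall i, (m <= i)%nat -> c i = 0) -> 0 < r ->
  exists b1' b2', good_ball b1' /\ good_ball b2' /\ subball b1' b1 /\ subball b2' b2 /\
    steers b1' b2' c r.
Proof.
  destruct b1 as [a rho], b2 as [b sigma].
  intros [Ga Hrho] [Gb Hsigma] Hc Hcm Hr. simpl in *.
  destruct (HC_nonempty b Gb) as [x0 Hx0].
  destruct (HC_near_preimage (f b) x0 a c m (rho / 2) Hx0 (G_l2 a Ga) Hc Hcm)
    as [k [xs [Hxs [Haxs Hiter]]]]; [lra |].
  assert (H2k : 0 < 2 ^ S k) by (apply pow_lt; lra).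
  set (rho' := Rmin (rho / 4) (r / 2 ^ S k)).
  assert (Hrho' : 0 < rho') by (apply Rmin_pos; [lra | now apply Rdiv_lt_0_compat]).
  assert (Hrho1 : rho' <= rho / 4) by apply Rmin_l.
  assert (Hrho2 : rho' <= r / 2 ^ S k) by apply Rmin_r.
  destruct (proj2 G_dense xs rho' Hxs Hrho') as [a' [Ga' Ha']].
  destruct (cont_on_prefix G f b f_cont Gb (k + m)) as [eps [Heps Hagree]].
  set (sigma' := Rmin sigma (eps / 2)).
  assert (Hsigma' : 0 < sigma') by (apply Rmin_pos; lra).
  assert (Hsigma1 : sigma' <= sigma) by apply Rmin_l.
  assert (Hsigma2 : sigma' <= eps / 2) by apply Rmin_r.
  exists (Ball a' rho'), (Ball b sigma'). unfold good_ball, subball; simpl.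
  split; [auto | split; [auto | split; [| split]]].
  - pose proof (l2dist_triangle a xs a' (G_l2 a Ga) Hxs (G_l2 a' Ga')).
    lra.
  - rewrite l2dist_refl. lra.
  - intros x y Hx Hxa Gy Hyb. unfold in_ball in Hxa, Hyb; simpl in Hxa, Hyb.
    exists k. rewrite <- (Hiter (f y)) by (intros j Hj; apply Hagree; auto; lra).
    eapply Rle_lt_trans; [apply l2dist_iter_Bw; auto |].
    pose proof (l2dist_triangle x a' xs Hx (G_l2 a' Ga') Hxs).
    rewrite (l2dist_sym a' x) in Hxa. rewrite (l2dist_sym xs a') in Ha'.
    assert (Hk : 2 ^ k * rho' <= r / 2) by
      (replace (r / 2) with (2 ^ k * (r / 2 ^ S k)) by (simpl; field; apply pow_nonzero; lra);
       apply Rmult_le_compat_l; [apply pow_le; lra | auto]).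
    assert (0 < 2 ^ k) by (apply pow_lt; lra).
    assert (l2dist x xs < 2 * rho') by lra.
    nra.
Qed.

Lemma steers_refine_list (A : list bool -> Prop) m e (L : list (list bool * list bool * seqR)) :
  0 < e ->
  (forall s t c, In (s, t, c) L -> A s /\ A t /\ s <> t /\ in_l2 c /\
     forall i, (m <= i)%nat -> c i = 0) ->
  forall F, (forall s, A s -> good_ball (F s)) ->
  exists F', (forall s, A s -> good_ball (F' s) /\ subball (F' s) (F s)) /\
    forall s t c, In (s, t, c) L -> steers (F' s) (F' t) c e.
Proof.
  intros He. induction L as [| [[s t] c] L IH]; intros HL F HF.
  { exists F. split; [intros; split; auto using subball_refl | intros ? ? ? []]. }
  destruct (IH (fun s' t' c' H => HL s' t' c' (or_intror H)) F HF) as [F1 [HF1 Hst1]].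
  destruct (HL s t c (or_introl eq_refl)) as [As [At [Hst [Hc Hcm]]]].
  destruct (steers_refine (F1 s) (F1 t) c m e (proj1 (HF1 s As)) (proj1 (HF1 t At)) Hc Hcm He)
    as [b1 [b2 [Hb1 [Hb2 [Hs1 [Hs2 Hsteer]]]]]].
  set (F' := update (update F1 s b1) t b2).
  assert (HF's : F' s = b1) by (unfold F'; rewrite update_neq, update_eq; auto).
  assert (HF't : F' t = b2) by apply update_eq.
  assert (HF'1 : forall u, A u -> good_ball (F' u) /\ subball (F' u) (F1 u)).
  { intros u Au. destruct (list_eq_dec bool_dec u s) as [-> | Hus]; [rewrite HF's; auto |].
    destruct (list_eq_dec bool_dec u t) as [-> | Hut]; [rewrite HF't; auto |].
    unfold F'. rewrite !update_neq by auto. split; [apply HF1; auto | apply subball_refl]. }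
  exists F'. split.
  - intros u Au. destruct (HF'1 u Au) as [Hg Hsub]. split; auto.
    destruct (HF u Au) as [Gu _], (HF1 u Au) as [[G1u _] Hsub1], Hg as [G'u _].
    apply (subball_trans _ (F1 u)); auto.
  - intros s' t' c' [E | Hin].
    + injection E as Es Et Ec. rewrite <- Es, <- Et, <- Ec, HF's, HF't. exact Hsteer.
    + destruct (HL s' t' c' (or_intror Hin)) as [As' [At' _]].
      apply (steers_subball (F1 s') (F1 t')); try apply HF'1; try apply HF1; auto.
Qed.

Lemma good_ball_split U : l2_open U -> (forall y, G y -> U y) ->
  forall b, good_ball b -> exists b1 b2,
    good_ball b1 /\ good_ball b2 /\ strict_subball b1 b /\ strict_subball b2 b /\
    ball_disj b1 b2 /\ (forall x, in_l2 x -> in_ball b1 x -> U x) /\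
    (forall x, in_l2 x -> in_ball b2 x -> U x).
Proof.
  intros HU HGU [c r] [Gc Hr]. simpl in *. pose proof (G_l2 c Gc) as Hc.
  destruct (exists_at_l2dist c (r / 4) Hc) as [p [Hp Hcp]]; [lra |].
  destruct (proj2 G_dense p (r / 16) Hp ltac:(lra)) as [y [Gy Hpy]].
  pose proof (G_l2 y Gy) as Hy.
  pose proof (l2dist_triangle c p y Hc Hp Hy).
  pose proof (l2dist_triangle c y p Hc Hy Hp). rewrite (l2dist_sym y p) in *.
  destruct (proj2 HU c (HGU c Gc)) as [ec [Hec Hc']].
  destruct (proj2 HU y (HGU y Gy)) as [ey [Hey Hy']].
  set (d := Rmin (r / 16) (Rmin (ec / 2) (ey / 2))).
  assert (Hd : 0 < d) by (apply Rmin_pos; [lra | apply Rmin_pos; lra]).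
  assert (Hd1 : d <= r / 16) by apply Rmin_l.
  assert (Hd2 : d <= ec / 2) by (eapply Rle_trans; [apply Rmin_r | apply Rmin_l]).
  assert (Hd3 : d <= ey / 2) by (eapply Rle_trans; [apply Rmin_r | apply Rmin_r]).
  exists (Ball c d), (Ball y d).
  unfold good_ball, strict_subball, ball_disj, in_ball; simpl. rewrite l2dist_refl.
  repeat split; auto; try lra; intros x Hx Hxd; [apply Hc' | apply Hy']; auto; lra.
Qed.

Definition level_ok (n : nat) (F : list bool -> ball) : Prop :=
  (forall s, length s = n -> good_ball (F s) /\ radius (F s) <= (/ 2) ^ n /\
     forall x, in_l2 x -> in_ball (F s) x -> Us n x) /\
  (forall s t c, length s = n -> length t = n -> s <> t -> In c (grid n) ->
     steers (F s) (F t) c (/ INR (S n))).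

Definition level_refines (n : nat) (F F' : list bool -> ball) : Prop :=
  (forall b s, length s = n -> strict_subball (F' (b :: s)) (F s)) /\
  (forall s, length s = n -> ball_disj (F' (true :: s)) (F' (false :: s))).

Lemma level_ok_0 : exists F, level_ok 0 F.
Proof.
  destruct (proj2 G_dense zero_seq 1 in_l2_zero ltac:(lra)) as [a [Ga _]].
  destruct (proj2 (Us_open 0) a (G_sub_Us a Ga 0)) as [e [He HU]].
  exists (fun _ => Ball a (Rmin 1 (e / 2))). split.
  - intros s _. unfold good_ball, in_ball; simpl.
    pose proof (Rmin_l 1 (e / 2)). pose proof (Rmin_r 1 (e / 2)).
    split; [split; auto; apply Rmin_pos; lra | split; [lra |]].
    intros x Hx Hax. apply HU; auto. lra.
  - intros [|] [|] c; simpl; congruence.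
Qed.

Lemma level_split n F U : l2_open U -> (forall y, G y -> U y) ->
  (forall s, length s = n -> good_ball (F s)) ->
  exists F1, (forall s, length s = S n -> good_ball (F1 s) /\
                (forall x, in_l2 x -> in_ball (F1 s) x -> U x)) /\
    level_refines n F F1.
Proof.
  intros HU HGU Hgood.
  destruct (choice (fun s (p : ball * ball) => length s = n ->
     good_ball (fst p) /\ good_ball (snd p) /\ strict_subball (fst p) (F s) /\
     strict_subball (snd p) (F s) /\ ball_disj (fst p) (snd p) /\
     (forall x, in_l2 x -> in_ball (fst p) x -> U x) /\
     (forall x, in_l2 x -> in_ball (snd p) x -> U x))) as [halves Hhalves].
  { intros s. destruct (Nat.eq_dec (length s) n) as [Hs | Hs].
    - destruct (good_ball_split U HU HGU (F s) (Hgood s Hs)) as [b1 [b2 H]].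
      now exists (b1, b2).
    - exists (F s, F s). intros; contradiction. }
  exists (fun s : list bool => match s return ball with
          | nil => F nil
          | b :: s => if b then fst (halves s) else snd (halves s)
          end).
  split; [| split].
  - intros [| b s] Hs; [discriminate |]. injection Hs as Hs.
    destruct (Hhalves s Hs) as (? & ? & _ & _ & _ & ? & ?). destruct b; auto.
  - intros b s Hs. destruct (Hhalves s Hs) as (_ & _ & ? & ? & _). destruct b; auto.
  - intros s Hs. apply (Hhalves s Hs).
Qed.

Lemma level_ok_step n F : level_ok n F -> exists F', level_ok (S n) F' /\ level_refines n F F'.
Proof.
  intros [Hballs Hsteer].
  destruct (level_split n F (Us (S n)) (Us_open (S n)) (fun y Gy => G_sub_Us y Gy (S n)))
    as [F1 [HF1 [Hstrict1 Hdisj1]]]; [intros s Hs; apply Hballs, Hs |].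
  destruct (steers_refine_list (fun s => length s = S n) (S n) (/ INR (S (S n)))
              (requirements (S n))) with (F := F1) as [F' [HF' Hsteer']].
  { apply Rinv_0_lt_compat, lt_0_INR. lia. }
  { intros s t c Hin. apply in_requirements in Hin. destruct Hin as (Hs & Ht & Hst & Hc).
    refine (conj Hs (conj Ht (conj Hst (conj (in_l2_grid _ _ Hc) _)))).
    intros; now apply (grid_support (S n)). }
  { intros s Hs. now apply HF1. }
  assert (Hcenter : forall s, length s = S n -> in_l2 (center (F1 s)) /\ in_l2 (center (F' s)))
    by (intros s Hs; split; apply G_l2; [apply HF1 | apply HF']; auto).
  assert (Hstrict : forall b s, length s = n -> strict_subball (F' (b :: s)) (F s)).
  { intros b s Hs. destruct (Hcenter (b :: s) ltac:(simpl; lia)).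
    apply (strict_subball_trans _ (F1 (b :: s))); auto; [| apply HF'; simpl; lia ..].
    apply G_l2, Hballs, Hs. }
  exists F'. split; [split | split].
  - intros [| b s] Hs; [discriminate |]. injection Hs as Hs.
    destruct (Hcenter (b :: s) ltac:(simpl; lia)).
    split; [apply HF'; simpl; lia | split].
    + destruct (Hstrict b s Hs) as [_ Hr]. destruct (Hballs s Hs) as [_ [Hrs _]].
      pose proof (l2dist_ge0 (center (F s)) (center (F' (b :: s)))). simpl. lra.
    + intros x Hx Hin. apply (HF1 (b :: s) ltac:(simpl; lia)); auto.
      apply (in_subball _ (F' (b :: s))); auto. apply HF'. simpl; lia.
  - intros s t c Hs Ht Hst Hc. apply Hsteer', in_requirements. auto.
  - exact Hstrict.
  - intros s Hs. destruct (Hcenter (true :: s)), (Hcenter (false :: s)); try (simpl; lia).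
    apply (ball_disj_subball (F1 (true :: s)) (F1 (false :: s))); auto;
      [apply HF'; simpl; lia ..].
Qed.

Lemma cantor_scheme_exists : exists B : list bool -> ball,
  (forall s, good_ball (B s) /\ radius (B s) <= (/ 2) ^ length s /\
     forall x, in_l2 x -> in_ball (B s) x -> Us (length s) x) /\
  (forall b s, strict_subball (B (b :: s)) (B s)) /\
  (forall s, ball_disj (B (true :: s)) (B (false :: s))) /\
  (forall s t c, length s = length t -> s <> t -> In c (grid (length s)) ->
     steers (B s) (B t) c (/ INR (S (length s)))).
Proof.
  destruct level_ok_0 as [F0 HF0].
  destruct (choice (fun (p : nat * (list bool -> ball)) F' => level_ok (fst p) (snd p) ->
                      level_ok (S (fst p)) F' /\ level_refines (fst p) (snd p) F'))
    as [next Hnext].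
  { intros [n F]. destruct (classic (level_ok n F)) as [H | H].
    - destruct (level_ok_step n F H) as [F' HF']. now exists F'.
    - exists F. intros; contradiction. }
  set (fam := fix fam n := match n with O => F0 | S n => next (n, fam n) end).
  assert (Hok : forall n, level_ok n (fam n)).
  { induction n as [|n IH]; [exact HF0 | exact (proj1 (Hnext (n, fam n) IH))]. }
  assert (Href : forall n, level_refines n (fam n) (fam (S n)))
    by (intros n; exact (proj2 (Hnext (n, fam n) (Hok n)))).
  exists (fun s => fam (length s) s). split; [| split; [| split]].
  - intros s. apply (Hok (length s)). reflexivity.
  - intros b s. apply (Href (length s)). reflexivity.
  - intros s. apply (Href (length s)). reflexivity.
  - intros s t c Hst Hne Hc. rewrite <- Hst. apply (Hok (length s)); auto.
Qed.

Lemma scheme_limit_HC B : (forall s, good_ball (B s)) ->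
  (forall s, radius (B s) <= (/ 2) ^ length s) ->
  (forall s t c, length s = length t -> s <> t -> In c (grid (length s)) ->
     steers (B s) (B t) c (/ INR (S (length s)))) ->
  forall x y, scheme_limit B x -> scheme_limit B y -> x <> y -> G y -> HC (f y) x.
Proof.
  intros Hgood Hradius Hsteer x y Px Py Hxy Gy.
  assert (Hcenter : forall s, in_l2 (center (B s))) by (intros s; apply G_l2, Hgood).
  destruct (scheme_limit_separated B Hcenter Hradius x y Px Py Hxy) as [N HN].
  destruct Px as [Hx HPx], Py as [Hy HPy].
  split; [exact Hx |]. intros z eps Hz Heps.
  destruct (grid_dense z eps N Hz Heps) as [n [t [Hn [Ht Hdist]]]].
  destruct (HPx n) as [s [Hs Hxs]], (HPy n) as [u [Hu Hyu]].
  destruct (Hsteer s u t ltac:(lia) (HN s u ltac:(lia) Hxs Hyu) ltac:(now rewrite Hs)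
              x y Hx Hxs Gy Hyu) as [k Hk].
  exists k. rewrite Hs in Hk.
  pose proof (l2dist_triangle _ t z (in_l2_iter_Bw (f y) k x Hx) (in_l2_grid n t Ht) Hz).
  lra.
Qed.

End Construction.

Theorem lemma6 (G : seqR -> Prop) (f : seqR -> weight) :
  l2_dense G -> l2_Gdelta G -> cont_on G f ->
  (forall y, G y -> ~ HC (f y) y) ->
  (forall y, G y -> exists x, HC (f y) x) ->
  (forall U, l2_open U -> (exists u, U u) ->
     exists y1 y2, U y1 /\ G y1 /\ U y2 /\ G y2 /\ f y1 <> f y2) ->
  exists P : seqR -> Prop,
    l2_perfect P /\ (forall x, P x -> G x) /\
    (forall x, P x -> ~ HC (f x) x) /\
    (forall x y, P x -> P y -> x <> y -> HC (f y) x).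
Proof.
  intros Hdense [Us [HUs HG]] Hcont Hnot Hne _.
  assert (HGUs : forall x, G x -> forall n, Us n x) by (intros x Gx; now apply HG).
  destruct (cantor_scheme_exists G f Us Hdense Hcont Hne HUs HGUs)
    as [B (HB & Hstrict & Hdisj & Hsteer)].
  assert (Hgood : forall s, good_ball G (B s)) by apply HB.
  assert (Hradius : forall s, radius (B s) <= (/ 2) ^ length s) by apply HB.
  assert (Hcenter : forall s, in_l2 (center (B s))) by (intros s; apply Hdense, Hgood).
  assert (HPG : forall x, scheme_limit B x -> G x).
  { intros x [Hx HPx]. apply HG. intros n. destruct (HPx n) as [s [<- Hxs]]. now apply HB. }
  exists (scheme_limit B). split; [| split; [| split]].
  - apply scheme_limit_perfect; auto. intros s. apply Hgood.
  - exact HPG.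
  - intros x Hx. now apply Hnot, HPG.
  - intros x y Hx Hy Hxy. apply (scheme_limit_HC G f Hdense B); auto.
Qed.
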